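(* Let $p$ be an odd prime and let $(P_n)_{n\ge0}$ be the Catalan-Larcombe-French numbers. Then for all integers $n$ with $0\le n\le p-1$, $$128^nP_{p-1-n}\equiv(-1)^{\frac{p-1}{2}}P_n\pmod{p}.$$ In particular, for $0\le n\le p-1$, $p\mid P_n$ if and only if $p\mid P_{p-1-n}$.
   Context: The Catalan-Larcombe-French numbers are defined by $P_0=1$, $P_1=8$ and, for $n\ge 2$, $n^2P_n-8(3n^2-3n+1)P_{n-1}+128(n-1)^2P_{n-2}=0$. *)

From mathcomp Require Import all_boot all_order all_algebra.
Set Implicit Arguments. Unset Strict Implicit. Unset Printing Implicit Defensive.
Import Order.TTheory GRing.Theory Num.Theory.
Local Open Scope ring_scope.

(* Catalan-Larcombe-French numbers, computed in rat from the defining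
   recurrence: P_0 = 1, P_1 = 8 and, for n >= 2,
   n^2 P_n = 8(3n^2-3n+1) P_{n-1} - 128 (n-1)^2 P_{n-2}.
   CLF_pair n = (P_n, P_{n+1}). *)
Fixpoint CLF_pair (n : nat) : rat * rat :=
  match n with
  | 0%N => (1, 8)
  | m.+1 =>
      let: (a, b) := CLF_pair m in
      let k : rat := (m.+2)%:R in
      (b, (8 * (3 * k ^+ 2 - 3 * k + 1) * b - 128 * (k - 1) ^+ 2 * a) / k ^+ 2)
  end.

Definition CLF (n : nat) : rat := (CLF_pair n).1.

(* congruence of rationals modulo an integer m (meaningful for integer values) *)
Definition rat_cong (m : nat) (x y : rat) : Prop :=
  exists k : int, x - y = m%:R * k%:~R.

(* The closed form P_n = sum_k C(n,2k) C(2k,k)^2 2^(3n-4k), proved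
   by exhibiting a telescoping (Zeilberger) certificate for the recurrence,
   shows that every P_n is an integer.  Modulo p, the recurrence is invariant
   under n |-> p-1-n up to the factor 128: since p-1-i = -(i+1) mod p, its
   coefficients n^2 and 128 (n-1)^2 trade places.  Hence 128^n P_{p-1-n} and
   P_{p-1} P_n satisfy the same recurrence with the same two initial values,
   and agree for n <= p-1.  Finally, by C(p-1,j) = (-1)^j and
   C(2k,k) = (-4)^k C((p-1)/2,k) mod p, the closed form gives
   P_{p-1} = sum_k C((p-1)/2,k)^2 = C(p-1,(p-1)/2) = (-1)^((p-1)/2) mod p. *)

From mathcomp Require Import all_boot all_order all_algebra.
From mathcomp Require Import ring zify.
Import GRing.Theory Num.Theory.
Local Open Scope ring_scope.
Set Implicit Arguments. Unset Strict Implicit. Unset Printing Implicit Defensive.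

Lemma bin_clf_identity (m j : nat) :
  (m.+2 ^ 2 * 'C(m.+2, j) + 2 * m.+1 ^ 2 * 'C(m, j) + j.+1 ^ 2 * 'C(m.+1, j.+1)
   = (3 * m.+2 * m.+1 + 1) * 'C(m.+1, j) + j ^ 2 * 'C(m.+1, j.-1))%N.
Proof.
have [lt_m1j | le_jm1] := ltnP m.+1 j.
  have [-> | ne_jm2] := eqVneq j m.+2; first by rewrite /= !binn !bin_small //; lia.
  by rewrite !bin_small //; lia.
(* Express every binomial through C(m+1, j), writing m+1 = j+t. *)
have [t def_m] : exists t, m.+1 = (j + t)%N by exists (m.+1 - j)%N; rewrite subnKC.
have eA : (t.+1 * 'C(m.+2, j) = m.+2 * 'C(m.+1, j))%N.
  by rewrite -[m.+1 in RHS]/(m.+2).-1 mul_bin_down; congr (_ * _)%N; lia.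
have eB : (m.+1 * 'C(m, j) = t * 'C(m.+1, j))%N.
  by rewrite -[m in LHS]/(m.+1).-1 mul_bin_down; congr (_ * _)%N; lia.
have eC : (j.+1 * 'C(m.+1, j.+1) = t * 'C(m.+1, j))%N.
  by rewrite mul_bin_left; congr (_ * _)%N; lia.
have eD : (t.+1 * (j * 'C(m.+1, j.-1)) = j * (j * 'C(m.+1, j)))%N.
  case: j {le_jm1 eA eB eC} def_m => [|i] def_m; first by rewrite !mul0n muln0.
  by rewrite mulnCA mul_bin_left; congr (_ * (_ * _))%N; lia.
apply/eqP; rewrite -(@eqn_pmul2l (t.+1 * m.+1)) //; apply/eqP.
transitivity (m.+1 * m.+2 ^ 2 * (t.+1 * 'C(m.+2, j))
  + 2 * m.+1 * t.+1 * m.+1 * (m.+1 * 'C(m, j))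
  + j.+1 * t.+1 * m.+1 * (j.+1 * 'C(m.+1, j.+1)))%N; first ring.
transitivity (t.+1 * m.+1 * (3 * m.+2 * m.+1 + 1) * 'C(m.+1, j)
  + m.+1 * (t.+1 * (j * 'C(m.+1, j.-1))) * j)%N; last ring.
rewrite eA eB eC eD def_m; ring.
Qed.

Lemma mul_bin_middleS (k : nat) :
  (k.+1 * 'C(k.+1.*2, k.+1) = 2 * k.*2.+1 * 'C(k.*2, k))%N.
Proof.
have sym : 'C(k.*2.+1, k) = 'C(k.*2.+1, k.+1).
  by rewrite -bin_sub -addnn ?subSn ?addnK ?leq_addr //; lia.
have := mul_bin_diag k.*2.+1 k; rewrite -[k.*2.+1.-1]/(k.*2) => diag.
by rewrite doubleS binS sym; nia.
Qed.

Lemma sum_bin_sqr (n m : nat) : (n <= m)%N ->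
  (\sum_(k < m.+1) 'C(n, k) ^ 2)%N = 'C(n.*2, n).
Proof.
move=> le_nm; rewrite -addnn -(binomial.Vandermonde n n n).
rewrite -(subnKC le_nm) -addSn big_split_ord /= [X in (_ + X)%N]big1 ?addn0.
  by apply: eq_bigr => j _; rewrite bin_sub ?mulnn // -ltnS.
by move=> j _; rewrite bin_small // ltnS leq_addr.
Qed.

Lemma eqr_from_scaled (R : comPzRingType) (a b c d : R) :
  c = d -> forall k, a - b = k * (c - d) -> a = b.
Proof. by move=> cd k e; apply/eqP; rewrite -subr_eq0 e cd subrr mulr0. Qed.

Definition clf_term (n k : nat) : rat :=
  'C(n, k.*2)%:R * 'C(k.*2, k)%:R ^+ 2 * (8 ^+ n / 16 ^+ k).

(* Zeilberger certificate for the recurrence satisfied by [\sum_k clf_term n k]. *)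
Definition clf_cert (n k : nat) : rat :=
  - 4 * (k%:R * 'C(k.*2, k)%:R) ^+ 2 * 'C(n.-1, k.*2.-1)%:R * (8 ^+ n / 16 ^+ k).

Lemma clf_term_telescope (m k : nat) :
  (m.+2)%:R ^+ 2 * clf_term m.+2 k + 128 * (m.+1)%:R ^+ 2 * clf_term m k
    - 8 * (3 * (m.+2)%:R * (m.+1)%:R + 1) * clf_term m.+1 k
  = clf_cert m.+2 k.+1 - clf_cert m.+2 k.
Proof.
have := bin_clf_identity m k.*2.
move=> /(congr1 (fun n => n%:R : rat)) /eqP; rewrite -subr_eq0 -!muln2 => /eqP bin_id0.
have mid : (k.+1%:R * 'C(k.+1.*2, k.+1)%:R : rat) = 2 * k.*2.+1%:R * 'C(k.*2, k)%:R.
  by rewrite -natrM mul_bin_middleS !natrM.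
rewrite /clf_term /clf_cert {}mid doubleS /= -!muln2.
apply/eqP; rewrite -subr_eq0; apply/eqP.
rewrite -[RHS](mulr0 (64 * (8 ^+ m / 16 ^+ k) * 'C(k * 2, k)%:R ^+ 2)) -[in RHS]bin_id0.
by rewrite !exprS; field; rewrite expf_neq0.
Qed.

(* The truncated [3 * n - 4 * k] is harmless: the binomial vanishes when [n < k.*2]. *)
Definition clf_nat (n : nat) : nat :=
  \sum_(k < n.+1) 'C(n, k.*2) * 'C(k.*2, k) ^ 2 * 2 ^ (3 * n - 4 * k).

Lemma clf_term_nat (n k : nat) :
  clf_term n k = ('C(n, k.*2) * 'C(k.*2, k) ^ 2 * 2 ^ (3 * n - 4 * k))%:R.
Proof.
have [le_kn | lt_nk] := leqP k.*2 n; last by rewrite /clf_term bin_small // !mul0r !mul0n.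
rewrite /clf_term !natrM !natrX; congr (_ * _).
apply: (mulIf (expf_neq0 k (_ : 16 != 0 :> rat))) => //.
have -> : (16 : rat) = 2 ^+ 4 by [].
have -> : (8 : rat) = 2 ^+ 3 by [].
by rewrite divfK ?expf_neq0 // -!exprM -exprD subnK //; lia.
Qed.

Lemma clf_nat_sum (n d : nat) : (clf_nat n)%:R = \sum_(k < n.+1 + d) clf_term n k.
Proof.
elim: d => [|d IH].
  by rewrite addn0 natr_sum; apply: eq_bigr => k _; rewrite clf_term_nat.
by rewrite addnS big_ord_recr -IH /= /clf_term bin_small ?mul0r ?addr0 //; lia.
Qed.

Lemma clf_nat_rec (n : nat) :
  (n.+2 ^ 2 * clf_nat n.+2 + 128 * n.+1 ^ 2 * clf_nat n
   = 8 * (3 * n.+2 * n.+1 + 1) * clf_nat n.+1)%N.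
Proof.
apply/eqP; rewrite -(eqr_nat rat) -subr_eq0; apply/eqP.
transitivity ((n.+2)%:R ^+ 2 * (clf_nat n.+2)%:R + 128 * (n.+1)%:R ^+ 2 * (clf_nat n)%:R
  - 8 * (3 * (n.+2)%:R * (n.+1)%:R + 1) * (clf_nat n.+1)%:R : rat); first ring.
rewrite (clf_nat_sum n.+2 0) (clf_nat_sum n 2) (clf_nat_sum n.+1 1) addn0 !addn1 addn2.
rewrite !mulr_sumr -big_split -sumrB /=.
under eq_bigr do rewrite clf_term_telescope.
rewrite -(big_mkord xpredT (fun k => clf_cert n.+2 k.+1 - clf_cert n.+2 k)).
rewrite telescope_sumr // /clf_cert /= (@bin_small n.+1); last by rewrite -muln2; lia.
by rewrite !(mulr0, mul0r, expr0n) subrr.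
Qed.

Lemma clf_nat0 : clf_nat 0 = 1%N.
Proof. by rewrite /clf_nat big_ord1. Qed.

Lemma clf_nat1 : clf_nat 1 = 8%N.
Proof. by rewrite /clf_nat !big_ord_recr big_ord0. Qed.

Lemma CLF_pair_clf_nat (n : nat) : CLF_pair n = ((clf_nat n)%:R, (clf_nat n.+1)%:R).
Proof.
elim: n => [|n IH]; first by rewrite /= clf_nat0 clf_nat1.
rewrite /= IH; congr pair.
have n2_neq0 : ((n.+2)%:R : rat) ^+ 2 != 0 by rewrite expf_neq0 ?pnatr_eq0.
apply: (mulIf n2_neq0); rewrite divfK //.
move: (clf_nat_rec n) => /(congr1 (fun k => k%:R : rat)) rec.
by apply: (eqr_from_scaled rec (k := -1)); ring.
Qed.

Lemma CLF_clf_nat (n : nat) : CLF n = (clf_nat n)%:R.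
Proof. by rewrite /CLF CLF_pair_clf_nat. Qed.

Definition clf_recurrence (R : pzSemiRingType) (u : nat -> R) : Prop :=
  forall n, (n.+2)%:R ^+ 2 * u n.+2 + 128 * (n.+1)%:R ^+ 2 * u n
            = 8 * (3 * (n.+2)%:R * (n.+1)%:R + 1) * u n.+1.

Lemma clf_nat_recurrence (R : comPzSemiRingType) :
  clf_recurrence (fun n => (clf_nat n)%:R : R).
Proof.
move=> n /=.
transitivity ((n.+2 ^ 2 * clf_nat n.+2 + 128 * n.+1 ^ 2 * clf_nat n)%N%:R : R); first ring.
by rewrite clf_nat_rec; ring.
Qed.

Lemma rec2_unique (R : idomainType) (a b c u v : nat -> R) (N : nat) :
  (forall n, (n.+2 <= N)%N -> a n != 0) ->
  (forall n, (n.+2 <= N)%N -> a n * u n.+2 + c n * u n = b n * u n.+1) ->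
  (forall n, (n.+2 <= N)%N -> a n * v n.+2 + c n * v n = b n * v n.+1) ->
  u 0 = v 0 -> u 1 = v 1 -> forall n, (n <= N)%N -> u n = v n.
Proof.
move=> a_neq0 rec_u rec_v eq_u0 eq_u1.
have agree2 n : (n.+1 <= N)%N -> u n = v n /\ u n.+1 = v n.+1.
  elim: n => [|n IH] le_nN //; have [eq_un eq_un1] := IH (ltnW le_nN).
  split=> //; apply: (mulfI (a_neq0 n le_nN)); apply: (addIr (c n * u n)).
  by rewrite rec_u // eq_un eq_un1 rec_v.
by case=> [|n] le_nN //; case: (agree2 n le_nN).
Qed.

Section ClfModChar.

Variables (R : idomainType) (p : nat).
Hypothesis pcharRp : p \in [pchar R].

Let p_prime : prime p := pcharf_prime pcharRp.
Let p_gt0 : (0 < p)%N := prime_gt0 p_prime.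

Lemma natr_neq0_pchar (n : nat) : (0 < n < p)%N -> (n%:R : R) != 0.
Proof.
case/andP=> n_gt0 lt_np; rewrite -(dvdn_pcharf pcharRp).
by apply/negP => /(dvdn_leq n_gt0); rewrite leqNgt lt_np.
Qed.

Lemma natr_pred_sub_pchar (i : nat) : (i < p)%N -> ((p.-1 - i)%:R : R) = - (i.+1)%:R.
Proof.
move=> lt_ip; apply/eqP; rewrite -addr_eq0 -natrD.
by rewrite (_ : (_ + _)%N = p) ?(pcharf0 pcharRp) //; lia.
Qed.

Lemma bin_pred_pchar (j : nat) : (j < p)%N -> ('C(p.-1, j)%:R : R) = (-1) ^+ j.
Proof.
elim: j => [|j IH] lt_jp; first by rewrite bin0.
have : (p %| 'C(p, j.+1))%N by apply: prime_dvd_bin; rewrite ?lt_jp.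
rewrite (dvdn_pcharf pcharRp) -[in 'C(p, _)](prednK p_gt0) binS natrD.
by rewrite IH ?(ltnW lt_jp) // addr_eq0 => /eqP ->; rewrite exprS mulN1r.
Qed.

Lemma natr_fermat_pchar (a : nat) : ~~ (p %| a)%N -> (a%:R : R) ^+ p.-1 = 1.
Proof.
move=> p_ndvd_a; have a_neq0 : (a%:R : R) != 0 by rewrite -(dvdn_pcharf pcharRp).
apply: (mulIf a_neq0); rewrite mul1r -exprSr (prednK p_gt0) -natrX.
rewrite -(GRing.natr_mod_pchar pcharRp) (fermat_little a p_prime).
by rewrite (GRing.natr_mod_pchar pcharRp).
Qed.

Section Reflection.

Variable u : nat -> R.
Hypothesis u_rec : clf_recurrence u.

Lemma clf_recurrence_reflect_step (i : nat) : (i.+2 <= p.-1)%N ->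
  (i.+2)%:R ^+ 2 * (128 ^+ i.+2 * u (p.-1 - i.+2))
    + 128 * (i.+1)%:R ^+ 2 * (128 ^+ i * u (p.-1 - i))
  = 8 * (3 * (i.+2)%:R * (i.+1)%:R + 1) * (128 ^+ i.+1 * u (p.-1 - i.+1)).
Proof.
move=> le_i2p; have := u_rec (p.-1 - i.+2)%N.
rewrite (_ : (p.-1 - i.+2).+2 = p.-1 - i)%N; last lia.
rewrite (_ : (p.-1 - i.+2).+1 = p.-1 - i.+1)%N; last lia.
rewrite !natr_pred_sub_pchar; try lia.
rewrite !sqrrN => rec; apply: (eqr_from_scaled rec (k := 128 ^+ i.+1)).
by rewrite !exprS; ring.
Qed.

Lemma clf_recurrence_pred : 128 * u (p.-1 - 1) = 8 * u p.-1.
Proof.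
have p_gt1 := prime_gt1 p_prime.
have pred_p : ((p.-1)%:R : R) = -1 by rewrite -[p.-1]subn0 natr_pred_sub_pchar.
have := u_rec p.-2; rewrite subn1 (_ : p.-2.+2 = p)%N; last by lia.
rewrite (_ : p.-2.+1 = p.-1)%N; last by lia.
rewrite (pcharf0 pcharRp) pred_p => rec.
by apply: (eqr_from_scaled rec (k := 1)); ring.
Qed.

Lemma clf_recurrence_reflect : u 1 = 8 * u 0 ->
  forall n, (n <= p.-1)%N -> u 0 * (128 ^+ n * u (p.-1 - n)) = u p.-1 * u n.
Proof.
move=> u1; apply: (rec2_unique (a := fun n => (n.+2)%:R ^+ 2)
  (b := fun n => 8 * (3 * (n.+2)%:R * (n.+1)%:R + 1))
  (c := fun n => 128 * (n.+1)%:R ^+ 2)) => [n le_n2p | n le_n2p | n _ | |].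
- by rewrite expf_neq0 // natr_neq0_pchar //; lia.
- by rewrite -[RHS]mulrCA -(clf_recurrence_reflect_step le_n2p); ring.
- by rewrite -[RHS]mulrCA -u_rec; ring.
- by rewrite subn0 expr0 mul1r mulrC.
- by rewrite u1 expr1 clf_recurrence_pred; ring.
Qed.

End Reflection.

Hypothesis p_odd : odd p.

Lemma two_neq0_pchar : (2 : R) != 0.
Proof.
rewrite -(dvdn_pcharf pcharRp); apply: contraL p_odd => /(dvdn_leq (isT : 0 < 2)%N) le_p2.
by have -> : p = 2 by have := prime_gt1 p_prime; lia.
Qed.

Lemma bin_middle_pchar (k : nat) : (k < p)%N ->
  ('C(k.*2, k)%:R : R) = (-4) ^+ k * 'C(p./2, k)%:R.
Proof.
elim: k => [|k IH] lt_kp; first by rewrite bin0 expr0 mul1r bin0.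
have k1_neq0 : ((k.+1)%:R : R) != 0 by rewrite natr_neq0_pchar ?lt_kp.
apply: (mulfI k1_neq0); rewrite -natrM mul_bin_middleS !natrM IH ?(ltnW lt_kp) //.
rewrite [RHS]mulrCA -[in RHS]natrM mul_bin_left.
have -> : ((p./2 - k) * 'C(p./2, k))%:R = ((p./2)%:R - k%:R) * 'C(p./2, k)%:R :> R.
  have [le_kh | lt_hk] := leqP k p./2; first by rewrite natrM natrB.
  by rewrite bin_small // muln0 mulr0.
(* With h = p./2: 2 (2k+1) = -4 (h-k) + 2 (2h+1), and 2h+1 = p. *)
have half_p : ((p./2).*2.+1)%:R = 0 :> R by rewrite odd_halfK // prednK // pcharf0.
apply: (eqr_from_scaled half_p (k := 2 * (-4) ^+ k * 'C(p./2, k)%:R)).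
by rewrite -!muln2 exprS; ring.
Qed.

Lemma clf_nat_pred_term_pchar (k : nat) : (k <= p.-1)%N ->
  (('C(p.-1, k.*2) * 'C(k.*2, k) ^ 2 * 2 ^ (3 * p.-1 - 4 * k))%:R : R)
  = 'C(p./2, k)%:R ^+ 2.
Proof.
move=> le_kp; have [le_2kp | lt_p2k] := leqP k.*2 p.-1; last first.
  rewrite bin_small // (@bin_small p./2) ?expr0n //.
  by rewrite -ltn_double odd_halfK.
have p_ndvd8 : ~~ (p %| 2 ^ 3)%N.
  by rewrite (dvdn_pcharf pcharRp) natrX expf_neq0 ?two_neq0_pchar.
have pow2_fermat : (2 : R) ^+ (3 * p.-1 - 4 * k) * 2 ^+ (4 * k) = 1.
  rewrite -exprD subnK; last by move: le_2kp; rewrite -muln2; lia.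
  by rewrite exprM (_ : (2 : R) ^+ 3 = 8) ?natr_fermat_pchar // -natrX.
rewrite !natrM !natrX bin_pred_pchar; last lia.
rewrite -signr_odd odd_double expr0 mul1r bin_middle_pchar; last lia.
have pow4 : (-4 : R) ^+ k * (-4) ^+ k = 2 ^+ (4 * k).
  by rewrite -exprMn mulrNN exprM (_ : (4 : R) * 4 = 2 ^+ 4) // -natrX -natrM.
transitivity ('C(p./2, k)%:R ^+ 2 * (2 ^+ (3 * p.-1 - 4 * k) * ((-4) ^+ k * (-4) ^+ k)) : R).
  by ring.
by rewrite pow4 pow2_fermat mulr1.
Qed.

Lemma clf_nat_pred_pchar : ((clf_nat p.-1)%:R : R) = (-1) ^+ p./2.
Proof.
rewrite /clf_nat natr_sum.
rewrite (eq_bigr (fun k : 'I_p.-1.+1 => 'C(p./2, k)%:R ^+ 2)); last first.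
  by move=> k _; rewrite clf_nat_pred_term_pchar // -ltnS ltn_ord.
under eq_bigr do rewrite -natrX.
rewrite -natr_sum sum_bin_sqr; last by rewrite -(odd_halfK p_odd) -addnn leq_addr.
by rewrite odd_halfK // bin_pred_pchar // ltn_half_double -muln2; lia.
Qed.

Lemma clf_nat_reflect_pchar (n : nat) : (n <= p.-1)%N ->
  128 ^+ n * ((clf_nat (p.-1 - n))%:R : R) = (-1) ^+ p./2 * (clf_nat n)%:R.
Proof.
have P1 : ((clf_nat 1)%:R : R) = 8 * (clf_nat 0)%:R by rewrite clf_nat0 clf_nat1 mulr1.
move=> le_np; have := clf_recurrence_reflect (clf_nat_recurrence R) P1 le_np.
by rewrite /= clf_nat0 mul1r clf_nat_pred_pchar.
Qed.

Lemma clf_nat_reflect_eq0_pchar (n : nat) : (n <= p.-1)%N ->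
  ((clf_nat (p.-1 - n))%:R == 0 :> R) = ((clf_nat n)%:R == 0 :> R).
Proof.
have n128 : (128 : R) ^+ n != 0.
  have -> : (128 : R) = 2 ^+ 7 by rewrite -natrX.
  by rewrite -exprM expf_neq0 ?two_neq0_pchar.
move=> /clf_nat_reflect_pchar /(congr1 (fun x => x == 0)).
by rewrite !mulf_eq0 (negPf n128) signr_eq0.
Qed.

End ClfModChar.

Lemma rat_cong_Fp (p : nat) (a b : int) : prime p ->
  (a%:~R : 'F_p) = b%:~R -> rat_cong p a%:~R b%:~R.
Proof.
move=> p_prime /eqP; rewrite -subr_eq0 -rmorphB -(dvdz_pcharf (pchar_Fp p_prime)).
move=> /divzK ab; exists ((a - b) %/ p)%Z.
by rewrite -rmorphB -{1}ab rmorphM mulrC.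
Qed.

Lemma rat_dvd_nat (p N : nat) :
  (exists k : int, (N%:R : rat) = p%:R * k%:~R) <-> (p %| N)%N.
Proof.
split=> [[k Nk] | /divnK Np]; last by exists (N %/ p)%:Z; rewrite -{1}Np natrM mulrC.
have Nk_int : N%:Z = p%:Z * k by apply: (@intr_inj rat); rewrite rmorphM.
by have : (p%:Z %| N%:Z)%Z by rewrite Nk_int dvdz_mulr.
Qed.

Unset Implicit Arguments.

Theorem corollary5 (p : nat) (hp : prime p) (hodd : odd p) :
  forall n : nat, (n <= p.-1)%N ->
    rat_cong p (128 ^+ n * CLF (p.-1 - n)) ((-1) ^+ (p.-1./2) * CLF n)
    /\ ((exists k : int, CLF n = p%:R * k%:~R) <->
        (exists k : int, CLF (p.-1 - n) = p%:R * k%:~R)).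
Proof.
move=> n le_np; have pcharFp := pchar_Fp hp.
have half_pred : p.-1./2 = p./2 by rewrite -(odd_halfK hodd) half_double.
rewrite !CLF_clf_nat half_pred; split.
  have := rat_cong_Fp (a := 128 ^+ n * (clf_nat (p.-1 - n))%:Z)
                      (b := (-1) ^+ p./2 * (clf_nat n)%:Z) hp.
  rewrite !rmorphM !rmorphXn rmorphN1; apply.
  exact: clf_nat_reflect_pchar.
have eq0E := clf_nat_reflect_eq0_pchar pcharFp hodd le_np.
split=> /rat_dvd_nat dvd; apply/rat_dvd_nat; move: dvd.
  by rewrite !(dvdn_pcharf pcharFp) eq0E.
by rewrite !(dvdn_pcharf pcharFp) eq0E.
Qed.
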